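(* Let $F$ be an algebraically closed field with $\operatorname{char}F=2$, $R=F[[x,y]]$, and let $f\in R^2$ be such that $j_3(f)$ is contact equivalent to one of $(x^3,\,y^3+x^2y)$, $(x^3,\,y^3)$, $(x^3+x^2y,\,y^3+\lambda x^2y)$ with $\lambda\neq 1$, $(x^2y,\,x^3+y^3)$. Then $j_3(f)$ is $3$-determined. In particular $f$ is contact equivalent to the corresponding one of these forms.
   Context: $\mathfrak m=\langle x,y\rangle$, $j_3(f)$ is the image of $f$ in $R^2/\mathfrak m^4R^2$. Contact equivalence: $g=U\cdot\phi(f)$ with $U\in GL(2,R)$, $\phi\in\operatorname{Aut}(R)$. An element $h$ is $k$-determined if every $g\in R^2$ with $j_k(g)=j_k(h)$ is contact equivalent to $h$. *)

From mathcomp Require Import all_boot all_order all_algebra.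
Set Implicit Arguments. Unset Strict Implicit. Unset Printing Implicit Defensive.
Import GRing.Theory.
Local Open Scope ring_scope.

Section PS.
Variable F : fieldType.

(* f i j = coefficient of x^i y^j *)
Definition ps := nat -> nat -> F.
Definition ps2 := (ps * ps)%type.

Definition psC (c : F) : ps := fun i j => if (i == 0%N) && (j == 0%N) then c else 0.
Definition psmono (a b : nat) : ps := fun i j => if (i == a) && (j == b) then 1 else 0.
Definition psadd (f g : ps) : ps := fun i j => f i j + g i j.
Definition psscale (c : F) (f : ps) : ps := fun i j => c * f i j.
Definition psmul (f g : ps) : ps :=
  fun i j => \sum_(a < i.+1) \sum_(b < j.+1) f a b * g (i - a)%N (j - b)%N.
Definition pspow (f : ps) (n : nat) : ps := iter n (psmul f) (psC 1).

(* f(u,v), for u, v in the maximal ideal (u^a v^b has order >= a+b) *)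
Definition pssubst (f u v : ps) : ps :=
  fun i j => \sum_(a < (i + j).+1) \sum_(b < (i + j).+1)
               f a b * psmul (pspow u a) (pspow v b) i j.

(* phi in Aut(R): x |-> u, y |-> v with u,v in m and invertible Jacobian at 0 *)
Definition coord_change (u v : ps) : Prop :=
  u 0%N 0%N = 0 /\ v 0%N 0%N = 0 /\ u 1%N 0%N * v 0%N 1%N - u 0%N 1%N * v 1%N 0%N != 0.

Definition subst2 (f : ps2) (u v : ps) : ps2 := (pssubst f.1 u v, pssubst f.2 u v).

Record mat2 := Mat2 { m11 : ps; m12 : ps; m21 : ps; m22 : ps }.

Definition matmul (A B : mat2) : mat2 :=
  Mat2 (psadd (psmul (m11 A) (m11 B)) (psmul (m12 A) (m21 B)))
       (psadd (psmul (m11 A) (m12 B)) (psmul (m12 A) (m22 B)))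
       (psadd (psmul (m21 A) (m11 B)) (psmul (m22 A) (m21 B)))
       (psadd (psmul (m21 A) (m12 B)) (psmul (m22 A) (m22 B))).

Definition mat1 : mat2 := Mat2 (psC 1) (psC 0) (psC 0) (psC 1).

Definition GL2 (U : mat2) : Prop := exists V, matmul U V = mat1 /\ matmul V U = mat1.

Definition matapp (U : mat2) (f : ps2) : ps2 :=
  (psadd (psmul (m11 U) f.1) (psmul (m12 U) f.2),
   psadd (psmul (m21 U) f.1) (psmul (m22 U) f.2)).

Definition contact_equiv (f g : ps2) : Prop :=
  exists U u v, GL2 U /\ coord_change u v /\ g = matapp U (subst2 f u v).

(* equality of images in R^2 / m^(k+1) R^2 *)
Definition jet_eq (k : nat) (g h : ps2) : Prop :=
  forall i j, (i + j <= k)%N -> g.1 i j = h.1 i j /\ g.2 i j = h.2 i j.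

(* j_k(f) as the polynomial truncation (representative in R^2) *)
Definition jet (k : nat) (f : ps2) : ps2 :=
  (fun i j => if (i + j <= k)%N then f.1 i j else 0,
   fun i j => if (i + j <= k)%N then f.2 i j else 0).

Definition determined (k : nat) (h : ps2) : Prop :=
  forall g, jet_eq k g h -> contact_equiv h g.

Definition NF1 : ps2 := (psmono 3 0, psadd (psmono 0 3) (psmono 2 1)).
Definition NF2 : ps2 := (psmono 3 0, psmono 0 3).
Definition NF3 (lam : F) : ps2 :=
  (psadd (psmono 3 0) (psmono 2 1), psadd (psmono 0 3) (psscale lam (psmono 2 1))).
Definition NF4 : ps2 := (psmono 2 1, psadd (psmono 3 0) (psmono 0 3)).

End PS.

(* Contact equivalence is an equivalence relation (a coordinate change is inverted by
   Newton iteration with the Jacobian frozen at 0) and it preserves 3-jets, so it suffices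
   to show that each normal form h is 3-determined.  Given g with j_3 g = j_3 h, an
   approximate equivalence g = M h(p, q) mod m^(n+4) is corrected to the next order by
   writing the residual r in m^(n+4) as r = E h + Dh (d, e) with E in m^(n+1) and d, e in
   m^(n+2).  In characteristic 2 this decomposition of m^k R^2 (k >= 4) is written down
   monomial by monomial, and the corrections converge m-adically.  Power series are handled
   through their polynomial truncations, on which substitution is a ring morphism. *)

From mathcomp Require Import all_boot all_order all_algebra.
From mathcomp Require Import ring zify.
From Stdlib Require Import FunctionalExtensionality.
Set Implicit Arguments. Unset Strict Implicit. Unset Printing Implicit Defensive.
Import GRing.Theory.
Local Open Scope ring_scope.

(* A bivariate polynomial [P : bpoly F] is read with the outer variable as y:
   [P`_j`_i] is the coefficient of x^i y^j, matching [f i j] for [f : ps F]. *)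
Notation bpoly F := {poly {poly F}}.

Section TruncatedModel.
Context {F : fieldType}.

Definition pC (c : F) : bpoly F := c%:P%:P.
Definition pX : bpoly F := 'X%:P.
Definition pY : bpoly F := 'X.

(* [ordge k P] says P lies in m^k; [approx N f P] says P represents f modulo m^(N+1). *)
Definition ordge (k : nat) (P : bpoly F) := forall i j, (i + j < k)%N -> P`_j`_i = 0.

Definition approx (N : nat) (f : ps F) (P : bpoly F) :=
  forall i j, (i + j <= N)%N -> f i j = P`_j`_i.

Definition ps_trunc (N : nat) (f : ps F) : bpoly F :=
  \poly_(j < N.+1) \poly_(i < N.+1) f i j.

Lemma coef2M (P Q : bpoly F) i j : (P * Q)`_j`_i =
  \sum_(b < j.+1) \sum_(a < i.+1) P`_b`_a * Q`_(j - b)`_(i - a).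
Proof. by rewrite coefM coef_sum; apply: eq_bigr => b _; rewrite coefM. Qed.

Lemma coef_pC c i j : (pC c)`_j`_i = if (i == 0%N) && (j == 0%N) then c else 0.
Proof. by rewrite /pC coefC; case: (j == 0%N); rewrite ?coefC ?coef0 //; case: (i == 0%N). Qed.

Lemma coef_pCM c P i j : (pC c * P)`_j`_i = c * P`_j`_i.
Proof. by rewrite /pC !coefCM. Qed.

Lemma coef_pX i j : pX`_j`_i = if (i == 1%N) && (j == 0%N) then 1 else 0.
Proof.
by rewrite /pX coefC; case: (j == 0%N); rewrite ?coefX ?coef0 ?andbT ?andbF //; case: (i == 1%N).
Qed.

Lemma coef_pY i j : pY`_j`_i = if (i == 0%N) && (j == 1%N) then 1 else 0.
Proof.
rewrite /pY coefX; case: (j == 1%N) => /=; rewrite ?coef1 ?coef0 ?andbT ?andbF //.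
by case: (i == 0%N).
Qed.

Lemma pC0 : pC 0 = 0. Proof. by rewrite /pC !polyC0. Qed.
Lemma pC1 : pC 1 = 1. Proof. by rewrite /pC !polyC1. Qed.
Lemma pCM a b : pC (a * b) = pC a * pC b. Proof. by rewrite /pC !polyCM. Qed.
Lemma pCB a b : pC (a - b) = pC a - pC b. Proof. by rewrite /pC !polyCB. Qed.

Lemma ordgeW k l P : (k <= l)%N -> ordge l P -> ordge k P.
Proof. by move=> hkl h i j hij; apply: h; apply: leq_trans hkl. Qed.

Lemma ordge0 k : ordge k 0.
Proof. by move=> i j _; rewrite !coef0. Qed.

Lemma ordge_subrr k P : ordge k (P - P).
Proof. by rewrite subrr; apply: ordge0. Qed.

Lemma ordgeD k P Q : ordge k P -> ordge k Q -> ordge k (P + Q).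
Proof. by move=> hP hQ i j h; rewrite !coefD hP // hQ // addr0. Qed.

Lemma ordgeN k P : ordge k P -> ordge k (- P).
Proof. by move=> hP i j h; rewrite !coefN hP // oppr0. Qed.

Lemma ordgeB k P Q : ordge k P -> ordge k Q -> ordge k (P - Q).
Proof. by move=> hP hQ; apply: ordgeD => //; apply: ordgeN. Qed.

Lemma ordgeM k l P Q : ordge k P -> ordge l Q -> ordge (k + l) (P * Q).
Proof.
move=> hP hQ i j h; rewrite coef2M; apply: big1 => b _; apply: big1 => a _.
have hb := ltn_ord b; have ha := ltn_ord a.
have [hab|hab] := ltnP (a + b) k; first by rewrite hP // mul0r.
by rewrite hQ ?mulr0 //; lia.
Qed.

Lemma ordgeMl k P Q : ordge k Q -> ordge k (P * Q).
Proof. exact: (@ordgeM 0). Qed.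

Lemma ordgeX k P n : ordge k P -> ordge (k * n) (P ^+ n).
Proof.
move=> h; elim: n => [|n IH]; first by move=> i j; rewrite muln0.
by rewrite exprS mulnS; apply: ordgeM.
Qed.

Lemma ordge_sum k (I : Type) (r : seq I) (Pr : pred I) (G : I -> bpoly F) :
  (forall i, Pr i -> ordge k (G i)) -> ordge k (\sum_(i <- r | Pr i) G i).
Proof. by move=> h; elim/big_ind: _ => //; [exact: ordge0 | exact: ordgeD]. Qed.

Lemma ordge1_shift k P P' : ordge 1 P -> ordge k.+1 (P' - P) -> ordge 1 P'.
Proof. by move=> hP hd; rewrite -(subrK P P'); apply: ordgeD => //; apply: ordgeW hd. Qed.

Lemma ordge_pX : ordge 1 pX.
Proof. by move=> [|i] j h; rewrite coef_pX. Qed.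

Lemma ordge_pY : ordge 1 pY.
Proof. by move=> i [|[|j]] h; rewrite coef_pY ?andbF //; lia. Qed.

Lemma approx_trunc N f : approx N f (ps_trunc N f).
Proof.
move=> i j h; rewrite /ps_trunc coef_poly ifT; last by lia.
by rewrite coef_poly ifT //; lia.
Qed.

Lemma approxW N M f P : (M <= N)%N -> approx N f P -> approx M f P.
Proof. by move=> hMN h i j hij; apply: h; apply: leq_trans hMN. Qed.

Lemma approx_ordge N f P Q : approx N f P -> ordge N.+1 (Q - P) -> approx N f Q.
Proof.
move=> h hQ i j hij; rewrite h //.
by move/eqP: (hQ i j hij); rewrite !coefB subr_eq0 => /eqP.
Qed.

Lemma ordge_approx N f P Q : approx N f P -> approx N f Q -> ordge N.+1 (P - Q).
Proof. by move=> hP hQ i j hij; rewrite !coefB -hP -?hQ ?subrr //; lia. Qed.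

Lemma ordge_trunc N M f : (N <= M)%N -> ordge N.+1 (ps_trunc M f - ps_trunc N f).
Proof.
by move=> hNM; apply: ordge_approx (approxW hNM (approx_trunc (N := M) f)) (approx_trunc f).
Qed.

Lemma approx_ordge1 N u U : approx N u U -> u 0%N 0%N = 0 -> ordge 1 U.
Proof. by move=> hu hu0 [|i] [|j] //= _; rewrite -hu. Qed.

Lemma ps_ext (f g : ps F) : (forall N, exists P, approx N f P /\ approx N g P) -> f = g.
Proof.
move=> h; apply: functional_extensionality_dep => i.
apply: functional_extensionality_dep => j.
by have [P [h1 h2]] := h (i + j)%N; rewrite h1 // h2.
Qed.

Lemma approx_add N f g P Q : approx N f P -> approx N g Q -> approx N (psadd f g) (P + Q).
Proof. by move=> hf hg i j h; rewrite /psadd !coefD hf // hg. Qed.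

Lemma approx_C N c : approx N (psC c) (pC c).
Proof. by move=> i j h; rewrite /psC coef_pC. Qed.

Lemma approx_scale N c f P : approx N f P -> approx N (psscale c f) (pC c * P).
Proof. by move=> hf i j h; rewrite /psscale coef_pCM hf. Qed.

Lemma approx_mul N f g P Q : approx N f P -> approx N g Q -> approx N (psmul f g) (P * Q).
Proof.
move=> hf hg i j h; rewrite /psmul coef2M exchange_big /=.
apply: eq_bigr => a _; apply: eq_bigr => b _.
have ha := ltn_ord a; have hb := ltn_ord b.
by rewrite hf ?hg //; lia.
Qed.

Lemma approx_mono N a b : approx N (psmono F a b) (pX ^+ a * pY ^+ b).
Proof.
move=> i j h; rewrite /psmono /pX /pY -rmorphXn /= coefCM coefXn.
case: (j == b); last by rewrite mulr0 coef0 andbF.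
by rewrite mulr1 coefXn andbT; case: (i == a).
Qed.

Lemma approx_pow N f P n : approx N f P -> approx N (pspow f n) (P ^+ n).
Proof.
move=> hf; elim: n => [|n IH]; first by rewrite expr0 -pC1; apply: approx_C.
by rewrite /pspow iterS exprS; apply: approx_mul.
Qed.

End TruncatedModel.

Section Substitution.
Context {F : fieldType}.
Implicit Types (P Q U V : bpoly F).

Lemma pC_commr U : commr_rmorph (polyC \o polyC : {rmorphism F -> bpoly F}) U.
Proof. by move=> a; apply: mulrC. Qed.

Lemma horner_commr U V : commr_rmorph (horner_morph (pC_commr U)) V.
Proof. by move=> a; apply: mulrC. Qed.

(* P(U, V): the inner Horner morphism sends x to U, the outer one sends y to V. *)
Definition psubst_morph U V : {rmorphism bpoly F -> bpoly F} :=
  horner_morph (horner_commr U V).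
Definition psubst P U V : bpoly F := psubst_morph U V P.

Lemma psubstD P Q U V : psubst (P + Q) U V = psubst P U V + psubst Q U V.
Proof. exact: rmorphD. Qed.
Lemma psubstB P Q U V : psubst (P - Q) U V = psubst P U V - psubst Q U V.
Proof. exact: rmorphB. Qed.
Lemma psubstM P Q U V : psubst (P * Q) U V = psubst P U V * psubst Q U V.
Proof. exact: rmorphM. Qed.
Lemma psubstX P n U V : psubst (P ^+ n) U V = psubst P U V ^+ n.
Proof. exact: rmorphXn. Qed.
Lemma psubst_pC c U V : psubst (pC c) U V = pC c.
Proof. by rewrite /psubst /= /pC horner_morphC /= horner_morphC. Qed.
Lemma psubst_pX U V : psubst pX U V = U.
Proof. by rewrite /psubst /= /pX horner_morphC /= horner_morphX. Qed.
Lemma psubst_pY U V : psubst pY U V = V.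
Proof. exact: horner_morphX. Qed.

Lemma bpoly_morph_ext (f g : {rmorphism bpoly F -> bpoly F}) :
  (forall c, f (pC c) = g (pC c)) -> f pX = g pX -> f pY = g pY -> f =1 g.
Proof.
move=> hc hx hy P; rewrite (poly_initial f) (poly_initial g) /= /horner_morph.
have -> : f 'X = g 'X by exact: hy.
congr (_.[_]); apply: eq_map_poly => q /=.
have hf := poly_initial (f \o polyC) q; have hg := poly_initial (g \o polyC) q.
rewrite /= in hf hg; rewrite hf hg /horner_morph.
have -> : f 'X%:P = g 'X%:P by exact: hx.
by congr (_.[_]); apply: eq_map_poly => c /=; exact: hc.
Qed.

Lemma psubst_comp P U V U' V' :
  psubst (psubst P U V) U' V' = psubst P (psubst U U' V') (psubst V U' V').
Proof.
apply: (@bpoly_morph_ext (psubst_morph U' V' \o psubst_morph U V)) => [c||] /=;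
  rewrite -!/(psubst _ _ _).
- by rewrite !psubst_pC.
- by rewrite !psubst_pX.
- by rewrite !psubst_pY.
Qed.

Lemma psubst_id P : psubst P pX pY = P.
Proof.
apply: (@bpoly_morph_ext (psubst_morph pX pY) idfun) => [c||] /=;
  rewrite -!/(psubst _ _ _).
- exact: psubst_pC.
- exact: psubst_pX.
- exact: psubst_pY.
Qed.

Definition deg_bound P : nat := (size P + \sum_(b < size P) size (P`_b)%R)%N.

Lemma size_le_deg_bound P : (size P <= deg_bound P)%N.
Proof. exact: leq_addr. Qed.

Lemma size_coef_le_deg_bound P b : (size (P`_b)%R <= deg_bound P)%N.
Proof.
have [hb|hb] := ltnP b (size P); last by rewrite nth_default // size_poly0.
by apply: leq_trans (leq_addl _ _); rewrite (bigD1 (Ordinal hb)) //= leq_addr.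
Qed.

Lemma psubst_expand n P U V : (deg_bound P <= n)%N ->
  psubst P U V = \sum_(b < n) \sum_(a < n) pC P`_b`_a * (U ^+ a * V ^+ b).
Proof.
move=> hn; rewrite /psubst /= /horner_morph (horner_coef_wide (n := n)); last first.
  exact: leq_trans (size_poly _ _) (leq_trans (size_le_deg_bound P) hn).
apply: eq_bigr => b _; rewrite coef_map_id0 ?map_poly0 ?horner0 //=.
rewrite (horner_coef_wide (n := n)); last first.
  exact: leq_trans (size_poly _ _) (leq_trans (size_coef_le_deg_bound P b) hn).
rewrite mulr_suml; apply: eq_bigr => a _.
by rewrite coef_map_id0 /= ?mulrA // !polyC0.
Qed.

Lemma coef_psubst n P U V i j : (deg_bound P <= n)%N ->
  (psubst P U V)`_j`_i = \sum_(b < n) \sum_(a < n) P`_b`_a * (U ^+ a * V ^+ b)`_j`_i.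
Proof.
move=> hn; rewrite (psubst_expand _ _ hn) !coef_sum; apply: eq_bigr => b _.
by rewrite !coef_sum; apply: eq_bigr => a _; rewrite coef_pCM.
Qed.

Lemma ordge_monomial U V a b : ordge 1 U -> ordge 1 V -> ordge (a + b) (U ^+ a * V ^+ b).
Proof. by move=> hU hV; apply: ordgeM; rewrite -[X in ordge X]mul1n; apply: ordgeX. Qed.

Lemma ordge_psubst k P U V : ordge k P -> ordge 1 U -> ordge 1 V -> ordge k (psubst P U V).
Proof.
move=> hP hU hV i j hij; rewrite (coef_psubst _ _ _ _ (leqnn _)).
apply: big1 => b _; apply: big1 => a _.
have [hab|hab] := ltnP (a + b) k; first by rewrite hP // mul0r.
by rewrite (ordge_monomial (a:=a) (b:=b) hU hV) ?mulr0 //; lia.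
Qed.

Lemma sum_ord_vanishing (G : nat -> F) m n : (m <= n)%N ->
  (forall a, (m <= a < n)%N -> G a = 0) -> \sum_(a < n) G a = \sum_(a < m) G a.
Proof.
move=> hmn h; rewrite -!(big_mkord xpredT) (big_cat_nat (leq0n m) hmn) /=.
rewrite [X in _ + X](_ : _ = 0) ?addr0 //.
by rewrite big_nat_cond; apply: big1 => a /andP [/h].
Qed.

Lemma approx_subst N f u v P U V : approx N f P -> approx N u U -> approx N v V ->
  u 0%N 0%N = 0 -> v 0%N 0%N = 0 -> approx N (pssubst f u v) (psubst P U V).
Proof.
move=> hf hu hv hu0 hv0 i j hij.
have oU := approx_ordge1 hu hu0; have oV := approx_ordge1 hv hv0.
pose G a b := P`_b`_a * (U ^+ a * V ^+ b)`_j`_i.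
have hz a b : (i + j < a + b)%N -> G a b = 0.
  by move=> h; rewrite /G (ordge_monomial (a:=a) (b:=b) oU oV) ?mulr0.
set M := maxn (i + j).+1 (deg_bound P).
rewrite /pssubst (coef_psubst (n := M) _ _ _ _ (leq_maxr _ _)).
transitivity (\sum_(a < (i + j).+1) \sum_(b < (i + j).+1) G a b).
  apply: eq_bigr => a _; apply: eq_bigr => b _.
  rewrite (approx_mul (approx_pow a hu) (approx_pow b hv)) //.
  have [hab|hab] := leqP (a + b) (i + j); first by rewrite hf //; lia.
  by rewrite [RHS]hz // (ordge_monomial (a:=a) (b:=b) oU oV) ?mulr0.
rewrite [RHS]exchange_big /= (@sum_ord_vanishing (fun a => \sum_(b < M) G a b) (i + j).+1 M);
  [|exact: leq_maxl|by move=> a /andP [ha _]; apply: big1 => b _; apply: hz; lia].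
apply: eq_bigr => a _; rewrite (@sum_ord_vanishing (G a) (i + j).+1 M) ?leq_maxl //.
by move=> b /andP [hb _]; apply: hz; have := ltn_ord a; lia.
Qed.

End Substitution.

Section FirstOrder.
Context {F : fieldType}.
Implicit Types (P R U V X Y : bpoly F).

Definition linear_part P : bpoly F := pC P`_0`_0 + pC P`_0`_1 * pX + pC P`_1`_0 * pY.

Lemma ordge_sub_linear_part P : ordge 2 (P - linear_part P).
Proof.
move=> i j h; rewrite !coefB !coefD !coef_pCM coef_pC coef_pX coef_pY.
case: i h => [|[|i]]; case: j => [|[|j]] //= h;
  rewrite ?mulr0 ?mulr1 ?addr0 ?add0r ?subrr //; lia.
Qed.

Lemma psubst_linear_part P U V :
  psubst (linear_part P) U V = pC P`_0`_0 + pC P`_0`_1 * U + pC P`_1`_0 * V.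
Proof. by rewrite !psubstD !psubstM !psubst_pC psubst_pX psubst_pY. Qed.

Lemma psubst_split_linear P U V : psubst P U V =
  psubst (P - linear_part P) U V + (pC P`_0`_0 + pC P`_0`_1 * U + pC P`_1`_0 * V).
Proof. by rewrite -psubst_linear_part -psubstD subrK. Qed.

Lemma coef00_psubst P U V : ordge 1 U -> ordge 1 V -> (psubst P U V)`_0`_0 = P`_0`_0.
Proof.
move=> hU hV; rewrite psubst_split_linear !coefD (ordge_psubst (ordge_sub_linear_part P)) //.
by rewrite add0r !coef_pCM coef_pC hU // hV // !mulr0 !addr0.
Qed.

Lemma ordge_subX X X' K a : ordge 1 X -> ordge K (X' - X) -> (1 <= K)%N ->
  ordge (K + a - 1) (X' ^+ a - X ^+ a).
Proof.
move=> hX hd hK; elim: a => [|a IH]; first by rewrite !expr0 subrr; apply: ordge0.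
have hX' : ordge 1 X' by rewrite -(subrK X X'); apply: ordgeD => //; apply: ordgeW hd.
rewrite (_ : X' ^+ a.+1 - X ^+ a.+1 = X' * (X' ^+ a - X ^+ a) + (X' - X) * X ^+ a);
  last by rewrite !exprS; ring.
apply: ordgeD; first by apply: ordgeW (ordgeM hX' IH); lia.
by apply: ordgeW (ordgeM hd (ordgeX (n:=a) hX)); lia.
Qed.

Lemma ordge_sub_monomial X X' Y Y' K a b : ordge 1 X -> ordge 1 Y ->
  ordge K (X' - X) -> ordge K (Y' - Y) -> (1 <= K)%N ->
  ordge (K + a + b - 1) (X' ^+ a * Y' ^+ b - X ^+ a * Y ^+ b).
Proof.
move=> hX hY hdX hdY hK.
have hY' : ordge 1 Y' by rewrite -(subrK Y Y'); apply: ordgeD => //; apply: ordgeW hdY.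
rewrite (_ : _ - _ = (X' ^+ a - X ^+ a) * Y' ^+ b + X ^+ a * (Y' ^+ b - Y ^+ b)); last by ring.
apply: ordgeD.
  case: a => [|a]; first by rewrite !expr0 subrr mul0r; apply: ordge0.
  by apply: ordgeW (ordgeM (ordge_subX (a:=a.+1) hX hdX hK) (ordgeX (n:=b) hY')); lia.
case: b => [|b]; first by rewrite !expr0 subrr mulr0; apply: ordge0.
by apply: ordgeW (ordgeM (ordgeX (n:=a) hX) (ordge_subX (a:=b.+1) hY hdY hK)); lia.
Qed.

Lemma ordge_psubst_sub R U V U' V' K : ordge 2 R -> ordge 1 U -> ordge 1 V ->
  ordge K (U' - U) -> ordge K (V' - V) -> (1 <= K)%N ->
  ordge K.+1 (psubst R U' V' - psubst R U V).
Proof.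
move=> hR hU hV hdU hdV hK.
rewrite !(psubst_expand (n := deg_bound R)) // -sumrB; apply: ordge_sum => b _.
rewrite -sumrB; apply: ordge_sum => a _; rewrite -mulrBr.
have [hab|hab] := ltnP (a + b) 2; first by rewrite hR // pC0 mul0r; apply: ordge0.
by apply: ordgeMl; apply: ordgeW (ordge_sub_monomial (a:=a) (b:=b) hU hV hdU hdV hK); lia.
Qed.

Lemma psubst_taylor1 P U V U' V' K : ordge 1 U -> ordge 1 V ->
  ordge K (U' - U) -> ordge K (V' - V) -> (1 <= K)%N ->
  ordge K.+1 (psubst P U' V' - psubst P U V - (pC P`_0`_1 * (U' - U) + pC P`_1`_0 * (V' - V))).
Proof.
move=> hU hV hdU hdV hK.
rewrite !(psubst_split_linear P) (_ : _ - _ - _ =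
  psubst (P - linear_part P) U' V' - psubst (P - linear_part P) U V); last by ring.
exact: ordge_psubst_sub (ordge_sub_linear_part P) hU hV hdU hdV hK.
Qed.

Lemma pssubst_linear_coef (f u v : ps F) : u 0%N 0%N = 0 -> v 0%N 0%N = 0 ->
  [/\ pssubst f u v 0%N 0%N = f 0%N 0%N,
      pssubst f u v 1%N 0%N = f 1%N 0%N * u 1%N 0%N + f 0%N 1%N * v 1%N 0%N &
      pssubst f u v 0%N 1%N = f 1%N 0%N * u 0%N 1%N + f 0%N 1%N * v 0%N 1%N].
Proof.
move=> hu0 hv0.
have tf := approx_trunc (N := 1) f; have tu := approx_trunc (N := 1) u.
have tv := approx_trunc (N := 1) v.
have hs := approx_subst tf tu tv hu0 hv0.
have hl := ordge_sub_linear_part (ps_trunc 1 f).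
have hl' := ordge_psubst hl (approx_ordge1 tu hu0) (approx_ordge1 tv hv0).
rewrite psubstB psubst_linear_part in hl'.
have c i j : (i + j <= 1)%N -> pssubst f u v i j =
    (pC (ps_trunc 1 f)`_0`_0 + pC (ps_trunc 1 f)`_0`_1 * ps_trunc 1 u
     + pC (ps_trunc 1 f)`_1`_0 * ps_trunc 1 v)`_j`_i.
  by move=> h; rewrite hs //; apply/eqP; rewrite -subr_eq0 -!coefB; apply/eqP; apply: hl'.
by split; rewrite c // !coefD !coef_pCM coef_pC /= -tu // -tv // ?hu0 ?hv0 -?tf //; ring.
Qed.

End FirstOrder.

Lemma ps_eq_approx (F : fieldType) (f g : ps F) :
  (forall N, exists P Q, approx N f P /\ approx N g Q /\ P = Q) -> f = g.
Proof.
move=> h; apply: ps_ext => N; have [P [Q [hP [hQ ePQ]]]] := h N.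
by exists P; split; last rewrite ePQ.
Qed.

Ltac approx_step := first [ apply: approx_add | apply: approx_mul | apply: approx_C
  | apply: approx_scale | apply: approx_mono | apply: approx_subst | apply: approx_trunc ].

(* Reduces an identity between power series built from psadd, psmul, pssubst, ...
   to the corresponding identity between their polynomial truncations. *)
Ltac ps_poly_eq := apply: ps_eq_approx => ?; do 2 eexists;
  split; [repeat approx_step | split; [repeat approx_step | ]].

Ltac psubst_simpl :=
  rewrite ?psubstD ?psubstX ?psubstM ?psubst_pC ?psubst_pX ?psubst_pY ?pC0 ?pC1.

Section ContactAlgebra.
Context {F : fieldType}.
Implicit Types (f u v : ps F) (U V W : mat2 F).

Definition matsubst U u v : mat2 F :=
  Mat2 (pssubst (m11 U) u v) (pssubst (m12 U) u v) (pssubst (m21 U) u v) (pssubst (m22 U) u v).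

Lemma matmulA U V W : matmul (matmul U V) W = matmul U (matmul V W).
Proof. by rewrite /matmul /=; congr Mat2; ps_poly_eq; ring. Qed.

Lemma matmul1l U : matmul (mat1 F) U = U.
Proof.
by case: U => a b c d; rewrite /matmul /=; congr Mat2; ps_poly_eq; rewrite ?pC0 ?pC1; ring.
Qed.

Lemma matappM U V (fs : ps2 F) : matapp U (matapp V fs) = matapp (matmul U V) fs.
Proof. by case: fs => f1 f2; rewrite /matapp /=; congr pair; ps_poly_eq; ring. Qed.

Lemma matapp1 (fs : ps2 F) : matapp (mat1 F) fs = fs.
Proof.
by case: fs => f1 f2; rewrite /matapp /=; congr pair; ps_poly_eq; rewrite ?pC0 ?pC1; ring.
Qed.

Lemma subst2_matapp U (fs : ps2 F) u v : u 0%N 0%N = 0 -> v 0%N 0%N = 0 ->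
  subst2 (matapp U fs) u v = matapp (matsubst U u v) (subst2 fs u v).
Proof.
by move=> hu hv; case: fs => f1 f2; rewrite /subst2 /=; congr pair; ps_poly_eq; psubst_simpl.
Qed.

Lemma matsubstM U V u v : u 0%N 0%N = 0 -> v 0%N 0%N = 0 ->
  matsubst (matmul U V) u v = matmul (matsubst U u v) (matsubst V u v).
Proof. by move=> hu hv; rewrite /matsubst /=; congr Mat2; ps_poly_eq; psubst_simpl. Qed.

Lemma matsubst1 u v : u 0%N 0%N = 0 -> v 0%N 0%N = 0 -> matsubst (mat1 F) u v = mat1 F.
Proof. by move=> hu hv; rewrite /matsubst /=; congr Mat2; ps_poly_eq; psubst_simpl. Qed.

Lemma pssubst_comp f u v (u' v' : ps F) : u 0%N 0%N = 0 -> v 0%N 0%N = 0 ->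
  u' 0%N 0%N = 0 -> v' 0%N 0%N = 0 ->
  pssubst (pssubst f u v) u' v' = pssubst f (pssubst u u' v') (pssubst v u' v').
Proof.
move=> hu hv hu' hv'.
have [hu2 _ _] := pssubst_linear_coef u hu' hv'; have [hv2 _ _] := pssubst_linear_coef v hu' hv'.
rewrite hu in hu2; rewrite hv in hv2.
by ps_poly_eq; rewrite ?psubst_comp.
Qed.

Lemma subst2_comp (fs : ps2 F) u v (u' v' : ps F) : u 0%N 0%N = 0 -> v 0%N 0%N = 0 ->
  u' 0%N 0%N = 0 -> v' 0%N 0%N = 0 ->
  subst2 (subst2 fs u v) u' v' = subst2 fs (pssubst u u' v') (pssubst v u' v').
Proof. by move=> *; rewrite /subst2 /= !pssubst_comp. Qed.

Lemma pssubst_id f : pssubst f (psmono F 1 0) (psmono F 0 1) = f.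
Proof. by ps_poly_eq; rewrite ?expr1 ?expr0 ?mulr1 ?mul1r ?psubst_id. Qed.

Lemma GL2_mul U V : GL2 U -> GL2 V -> GL2 (matmul U V).
Proof.
move=> [U' [hUU' hU'U]] [V' [hVV' hV'V]]; exists (matmul V' U'); split.
  by rewrite matmulA -(matmulA V) hVV' matmul1l.
by rewrite matmulA -(matmulA U') hU'U matmul1l.
Qed.

Lemma GL2_subst U u v : u 0%N 0%N = 0 -> v 0%N 0%N = 0 -> GL2 U -> GL2 (matsubst U u v).
Proof.
by move=> hu hv [U' [h1 h2]]; exists (matsubst U' u v); rewrite -!matsubstM // h1 h2 matsubst1.
Qed.

(* The Jacobian determinant at 0 is multiplicative under composition. *)
Lemma coord_change_comp u v (u' v' : ps F) : coord_change u v -> coord_change u' v' ->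
  coord_change (pssubst u u' v') (pssubst v u' v').
Proof.
move=> [hu [hv hd]] [hu' [hv' hd']].
have [a1 a2 a3] := pssubst_linear_coef u hu' hv'.
have [b1 b2 b3] := pssubst_linear_coef v hu' hv'.
split; first by rewrite a1.
split; first by rewrite b1.
rewrite a2 a3 b2 b3 (_ : _ - _ = (u 1%N 0%N * v 0%N 1%N - u 0%N 1%N * v 1%N 0%N) *
  (u' 1%N 0%N * v' 0%N 1%N - u' 0%N 1%N * v' 1%N 0%N)); last by ring.
exact: mulf_neq0.
Qed.

Lemma contact_equiv_trans (fs gs hs : ps2 F) :
  contact_equiv fs gs -> contact_equiv gs hs -> contact_equiv fs hs.
Proof.
move=> [U [u [v [hU [hc ->]]]]] [V [u' [v' [hV [hc' ->]]]]].
have [hu [hv _]] := hc; have [hu' [hv' _]] := hc'.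
exists (matmul V (matsubst U u' v')), (pssubst u u' v'), (pssubst v u' v').
split; first by apply: GL2_mul => //; apply: GL2_subst.
split; first exact: coord_change_comp.
by rewrite subst2_matapp // matappM subst2_comp.
Qed.

End ContactAlgebra.

Section Limits.
Context {F : fieldType}.
Implicit Types (S : nat -> bpoly F) (d : ps F).

Definition ps_lim S : ps F := fun i j => (S (i + j)%N)`_j`_i.

Definition coherent S := forall n m, (n <= m)%N -> ordge n.+1 (S m - S n).

Lemma approx_lim S n : coherent S -> approx n (ps_lim S) (S n).
Proof.
move=> hS i j h; rewrite /ps_lim.
by have /eqP := hS _ _ h i j (ltnSn _); rewrite !coefB subr_eq0 => /eqP.
Qed.

Lemma coherent_step S : (forall n, ordge n.+1 (S n.+1 - S n)) -> coherent S.
Proof.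
move=> h n m /subnK <-; elim: (m - n)%N => [|k IH]; first by rewrite add0n subrr; apply: ordge0.
rewrite addSn -(subrK (S (k + n)%N) (S (k + n).+1)) -addrA.
by apply: ordgeD => //; apply: ordgeW (h _); lia.
Qed.

Lemma ordge1_sub_coef00 (P : bpoly F) c : P`_0`_0 = c -> ordge 1 (P - pC c).
Proof. by move=> hP [|i] [|j] // _; rewrite !coefB coef_pC hP subrr. Qed.

(* Truncated geometric series for d^-1 = c (1 - (1 - c d))^-1, where c = d(0,0)^-1. *)
Definition inv_approx d n : bpoly F :=
  let c := (d 0%N 0%N)^-1 in pC c * \sum_(k < n.+1) (1 - pC c * ps_trunc n d) ^+ k.

Lemma ordge_inv_approx d n : d 0%N 0%N != 0 ->
  ordge n.+1 (1 - ps_trunc n d * inv_approx d n).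
Proof.
move=> hd; rewrite /inv_approx; set c := _^-1; set E := 1 - pC c * _.
have hE : ordge 1 E.
  rewrite /E -opprB -pC1; apply/ordgeN/ordge1_sub_coef00.
  by rewrite coef_pCM -(approx_trunc d) // mulVf.
rewrite (_ : 1 - _ = E ^+ n.+1).
  by rewrite -[X in ordge X]mul1n; apply: ordgeX.
rewrite (_ : ps_trunc n d * _ = - (E - 1) * \sum_(k < n.+1) E ^+ k); last by rewrite /E; ring.
by rewrite mulNr -subrX1; ring.
Qed.

Lemma coherent_inv_approx d : d 0%N 0%N != 0 -> coherent (inv_approx d).
Proof.
move=> hd n m hnm; set W := inv_approx d.
rewrite (_ : W m - W n = W m * (1 - ps_trunc n d * W n) - W n * (1 - ps_trunc m d * W m)
   - W m * W n * (ps_trunc m d - ps_trunc n d)); last by ring.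
apply: ordgeB; last exact/ordgeMl/ordge_trunc.
apply: ordgeB; first exact/ordgeMl/ordge_inv_approx.
by apply/ordgeMl/(ordgeW (l := m.+1)) => //; apply: ordge_inv_approx.
Qed.

Lemma ps_unit d : d 0%N 0%N != 0 -> exists w, psmul d w = psC 1.
Proof.
move=> hd; exists (ps_lim (inv_approx d)); apply: ps_ext => N; exists 1; split.
  have hW := approx_lim (n := N) (coherent_inv_approx hd).
  by apply: approx_ordge (approx_mul (approx_trunc d) hW) _; apply: ordge_inv_approx.
by rewrite -pC1; apply: approx_C.
Qed.

Lemma psmul00 (f g : ps F) : psmul f g 0%N 0%N = f 0%N 0%N * g 0%N 0%N.
Proof. by rewrite /psmul !big_ord1 !subn0. Qed.

(* Cramer's rule, with the determinant inverted in R. *)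
Lemma GL2_det (U : mat2 F) :
  m11 U 0%N 0%N * m22 U 0%N 0%N - m12 U 0%N 0%N * m21 U 0%N 0%N != 0 -> GL2 U.
Proof.
case: U => a b c e /= hdet.
pose d := psadd (psmul a e) (psscale (-1) (psmul b c)).
have [w hw] : exists w, psmul d w = psC 1.
  by apply: ps_unit; rewrite /d /psadd /psscale !psmul00 mulN1r.
exists (Mat2 (psmul w e) (psscale (-1) (psmul w b)) (psscale (-1) (psmul w c)) (psmul w a)).
rewrite /matmul /mat1 /=; split; congr Mat2.
all: first [ by rewrite -hw /d; ps_poly_eq; rewrite ?pC1 /pC ?polyCN; ring
           | by ps_poly_eq; rewrite ?pC0 /pC ?polyCN; ring ].
Qed.

End Limits.

Section InverseCoordChange.
Context {F : fieldType}.
Variables u v : ps F.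
Hypothesis huv : coord_change u v.

Definition jacobian_inv : F := (u 1%N 0%N * v 0%N 1%N - u 0%N 1%N * v 1%N 0%N)^-1.

(* One Newton step for solving (u, v)(p, q) = (x, y), with the Jacobian frozen at 0. *)
Definition newton_step (n : nat) (pq : bpoly F * bpoly F) : bpoly F * bpoly F :=
  let: (p, q) := pq in
  let r1 := pX - psubst (ps_trunc n u) p q in
  let r2 := pY - psubst (ps_trunc n v) p q in
  (p + (pC (v 0%N 1%N * jacobian_inv) * r1 - pC (u 0%N 1%N * jacobian_inv) * r2),
   q + (pC (u 1%N 0%N * jacobian_inv) * r2 - pC (v 1%N 0%N * jacobian_inv) * r1)).

Fixpoint newton_seq (n : nat) : bpoly F * bpoly F :=
  if n is n'.+1 then newton_step n (newton_seq n') else (0, 0).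

Lemma newton_identity_x (R : comNzRingType) (a b c e D r1 r2 X E E' : R) :
  a * e * D = 1 + b * c * D -> r1 = X - E ->
  X - E' = - (E' - E - (a * (e * D * r1 - b * D * r2) + b * (a * D * r2 - c * D * r1))).
Proof. by move=> hD ->; ring: hD. Qed.

Lemma newton_identity_y (R : comNzRingType) (a b c e D r1 r2 Y E E' : R) :
  a * e * D = 1 + b * c * D -> r2 = Y - E ->
  Y - E' = - (E' - E - (c * (e * D * r1 - b * D * r2) + e * (a * D * r2 - c * D * r1))).
Proof. by move=> hD ->; ring: hD. Qed.

Lemma newton_step_residual n p q : (1 <= n)%N -> ordge 1 p -> ordge 1 q ->
  ordge n (pX - psubst (ps_trunc n u) p q) -> ordge n (pY - psubst (ps_trunc n v) p q) ->
  let pq' := newton_step n (p, q) in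
  [/\ ordge n (pq'.1 - p), ordge n (pq'.2 - q),
      ordge n.+1 (pX - psubst (ps_trunc n u) pq'.1 pq'.2)
    & ordge n.+1 (pY - psubst (ps_trunc n v) pq'.1 pq'.2)].
Proof.
case: huv => _ [_ hJ] hn hp hq h1 h2 /=.
set a := u 1%N 0%N; set b := u 0%N 1%N; set c := v 1%N 0%N; set e := v 0%N 1%N.
set r1 := pX - _; set r2 := pY - _.
set d1 := _ - _ * r2; set d2 := _ - _ * r1.
have e1 : p + d1 - p = d1 by rewrite addrC addKr.
have e2 : q + d2 - q = d2 by rewrite addrC addKr.
have o1 : ordge n d1 by apply: ordgeB; apply: ordgeMl.
have o2 : ordge n d2 by apply: ordgeB; apply: ordgeMl.
have hD : pC a * pC e * pC jacobian_inv = 1 + pC b * pC c * pC jacobian_inv.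
  by apply/eqP; rewrite -subr_eq -!pCM -pCB -mulrBl mulfV // pC1.
have d1E : d1 = pC e * pC jacobian_inv * r1 - pC b * pC jacobian_inv * r2 by rewrite /d1 !pCM.
have d2E : d2 = pC a * pC jacobian_inv * r2 - pC c * pC jacobian_inv * r1 by rewrite /d2 !pCM.
have tu := psubst_taylor1 (ps_trunc n u) hp hq (U' := p + d1) (V' := q + d2).
have tv := psubst_taylor1 (ps_trunc n v) hp hq (U' := p + d1) (V' := q + d2).
rewrite e1 e2 -!(approx_trunc u, approx_trunc v) // in tu tv.
rewrite e1 e2; split => //.
- by rewrite (newton_identity_x r2 _ hD (erefl r1)) -d1E -d2E; apply/ordgeN/tu.
- by rewrite (newton_identity_y r1 _ hD (erefl r2)) -d1E -d2E; apply/ordgeN/tv.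
Qed.

Definition solves_upto (n : nat) (pq : bpoly F * bpoly F) :=
  [/\ ordge 1 pq.1, ordge 1 pq.2, ordge n.+1 (pX - psubst (ps_trunc n u) pq.1 pq.2)
    & ordge n.+1 (pY - psubst (ps_trunc n v) pq.1 pq.2)].

Lemma residual_trunc_succ (f : ps F) (z p q : bpoly F) n : ordge 1 p -> ordge 1 q ->
  ordge n.+1 (z - psubst (ps_trunc n f) p q) -> ordge n.+1 (z - psubst (ps_trunc n.+1 f) p q).
Proof.
move=> hp hq hz; rewrite -[z - _](subrKA (psubst (ps_trunc n f) p q)) -psubstB.
by apply: ordgeD => //; apply: ordge_psubst hp hq; rewrite -opprB; apply/ordgeN/ordge_trunc.
Qed.

Lemma newton_seq_succ n : solves_upto n (newton_seq n) ->
  [/\ ordge n.+1 ((newton_seq n.+1).1 - (newton_seq n).1),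
      ordge n.+1 ((newton_seq n.+1).2 - (newton_seq n).2)
    & solves_upto n.+1 (newton_seq n.+1)].
Proof.
rewrite [newton_seq n.+1]/=; case: (newton_seq n) => p q [/= hp hq hx hy].
have hx' := residual_trunc_succ hp hq hx; have hy' := residual_trunc_succ hp hq hy.
have [dp dq hx'' hy''] := newton_step_residual (ltn0Sn n) hp hq hx' hy'.
by split=> //; split; [exact: ordge1_shift hp dp | exact: ordge1_shift hq dq | |].
Qed.

Lemma newton_seq_solves n : solves_upto n (newton_seq n).
Proof.
case: huv => hu [hv _]; elim: n => [|n IH]; last by case: (newton_seq_succ IH).
have o0 := @ordge0 F 1; split=> //= -[|i] [|j] // _; rewrite !coefB coef00_psubst //.
  by rewrite coef_pX -(approx_trunc u) ?hu ?subrr.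
by rewrite coef_pY -(approx_trunc v) ?hv ?subrr.
Qed.

Lemma coherent_newton_seq :
  coherent (fun n => (newton_seq n).1) /\ coherent (fun n => (newton_seq n).2).
Proof.
by split; apply: coherent_step => n; case: (newton_seq_succ (newton_seq_solves n)).
Qed.

Lemma coord_change_right_inverse : exists s t : ps F, coord_change s t /\
  pssubst u s t = psmono F 1 0 /\ pssubst v s t = psmono F 0 1.
Proof.
have [cohs coht] := coherent_newton_seq.
set s := ps_lim (fun n => (newton_seq n).1); set t := ps_lim (fun n => (newton_seq n).2).
have s0 : s 0%N 0%N = 0 by rewrite /s /ps_lim /= !coef0.
have t0 : t 0%N 0%N = 0 by rewrite /t /ps_lim /= !coef0.
have hsub (f : ps F) n :
    approx n (pssubst f s t) (psubst (ps_trunc n f) (newton_seq n).1 (newton_seq n).2).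
  exact: approx_subst (approx_trunc f) (approx_lim cohs) (approx_lim coht) s0 t0.
have eu : pssubst u s t = psmono F 1 0.
  apply: ps_ext => N; have [_ _ hx _] := newton_seq_solves N.
  exists (psubst (ps_trunc N u) (newton_seq N).1 (newton_seq N).2).
  split; first exact: hsub.
  apply: approx_ordge (@approx_mono _ N 1 0) _.
  by rewrite expr1 expr0 mulr1 -opprB; apply: ordgeN.
have ev : pssubst v s t = psmono F 0 1.
  apply: ps_ext => N; have [_ _ _ hy] := newton_seq_solves N.
  exists (psubst (ps_trunc N v) (newton_seq N).1 (newton_seq N).2).
  split; first exact: hsub.
  apply: approx_ordge (@approx_mono _ N 0 1) _.
  by rewrite expr1 expr0 mul1r -opprB; apply: ordgeN.
exists s, t; do !split=> //.
have [_ a2 a3] := pssubst_linear_coef u s0 t0; have [_ b2 b3] := pssubst_linear_coef v s0 t0.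
rewrite eu in a2 a3; rewrite ev in b2 b3.
have hJ : (u 1%N 0%N * v 0%N 1%N - u 0%N 1%N * v 1%N 0%N) *
    (s 1%N 0%N * t 0%N 1%N - s 0%N 1%N * t 1%N 0%N) = 1.
  rewrite (_ : _ * _ = psmono F 1 0 1%N 0%N * psmono F 0 1 0%N 1%N
                       - psmono F 1 0 0%N 1%N * psmono F 0 1 1%N 0%N).
    by rewrite /psmono /= mulr1 mulr0 subr0.
  by rewrite a2 a3 b2 b3; ring.
by apply/eqP => hst; move: hJ; rewrite hst mulr0 => /eqP; rewrite eq_sym oner_eq0.
Qed.

End InverseCoordChange.

Lemma contact_equiv_sym (F : fieldType) (fs gs : ps2 F) :
  contact_equiv fs gs -> contact_equiv gs fs.
Proof.
move=> [U [u [v [[V [hUV hVU]] [huv ->]]]]].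
have [s [t [hst [eu ev]]]] := coord_change_right_inverse huv.
have [[hu [hv _]] [hs [ht _]]] := (huv, hst).
exists (matsubst V s t), s, t; split; first by apply: GL2_subst => //; exists U.
split=> //; rewrite subst2_matapp // subst2_comp // eu ev matappM -matsubstM // hVU.
by rewrite matsubst1 // matapp1; case: fs => f1 f2; rewrite /subst2 /= !pssubst_id.
Qed.

Section BivariateMatrix.
Variable F : fieldType.

Record bmat := BMat { b11 : bpoly F; b12 : bpoly F; b21 : bpoly F; b22 : bpoly F }.

Definition bmat_add (M E : bmat) : bmat :=
  BMat (b11 M + b11 E) (b12 M + b12 E) (b21 M + b21 E) (b22 M + b22 E).

Definition bmat_app1 (M : bmat) (h1 h2 : bpoly F) := b11 M * h1 + b12 M * h2.
Definition bmat_app2 (M : bmat) (h1 h2 : bpoly F) := b21 M * h1 + b22 M * h2.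

Definition ordge_mat k (M : bmat) :=
  [/\ ordge k (b11 M), ordge k (b12 M), ordge k (b21 M) & ordge k (b22 M)].

Definition near_id (M : bmat) :=
  [/\ ordge 1 (b11 M - 1), ordge 1 (b12 M), ordge 1 (b21 M) & ordge 1 (b22 M - 1)].

Lemma near_id_add n M E : near_id M -> ordge_mat n.+1 E -> near_id (bmat_add M E).
Proof.
move=> [h11 h12 h21 h22] [e11 e12 e21 e22].
by split; rewrite /= 1?addrAC; apply: ordgeD => //; apply: ordgeW (ltn0Sn n) _.
Qed.

Lemma ordge_mat_add_sub M E k : ordge_mat k E ->
  [/\ ordge k (b11 (bmat_add M E) - b11 M), ordge k (b12 (bmat_add M E) - b12 M),
      ordge k (b21 (bmat_add M E) - b21 M) & ordge k (b22 (bmat_add M E) - b22 M)].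
Proof. by move=> [e11 e12 e21 e22]; split; rewrite /= addrC addKr. Qed.

(* After a correction step the residual of a row is
   -(e (H' - Z)) - (row - row0) l - row (H' - H - l), where each term has order k + 4. *)
Lemma ordge_residual_row k (G a b a0 b0 ea eb Z1 Z2 H1 H2 H1' H2' l1 l2 : bpoly F) :
  ordge 1 (a - a0) -> ordge 1 (b - b0) -> ordge k ea -> ordge k eb ->
  ordge 4 (H1' - Z1) -> ordge 4 (H2' - Z2) -> ordge k.+3 l1 -> ordge k.+3 l2 ->
  ordge k.+4 (H1' - H1 - l1) -> ordge k.+4 (H2' - H2 - l2) ->
  G - (a * H1 + b * H2) = ea * Z1 + eb * Z2 + (a0 * l1 + b0 * l2) ->
  ordge k.+4 (G - ((a + ea) * H1' + (b + eb) * H2')).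
Proof.
move=> ha hb hea heb hZ1 hZ2 hl1 hl2 hT1 hT2 /eqP; rewrite subr_eq => /eqP ->.
rewrite (_ : _ - _ = - (ea * (H1' - Z1) + eb * (H2' - Z2)) - ((a - a0) * l1 + (b - b0) * l2)
  - (a * (H1' - H1 - l1) + b * (H2' - H2 - l2))); last by ring.
apply: ordgeB; first apply: ordgeB; first apply: ordgeN.
- by apply: ordgeD; [apply: ordgeW (ordgeM hea hZ1) | apply: ordgeW (ordgeM heb hZ2)]; lia.
- by apply: ordgeD; [apply: ordgeW (ordgeM ha hl1) | apply: ordgeW (ordgeM hb hl2)]; lia.
- by apply: ordgeD; apply: ordgeMl.
Qed.

End BivariateMatrix.

Section DeterminacyCriterion.
Context {F : fieldType}.
Variables (nf : ps2 F) (N1 N2 : bpoly F) (L1 L2 : bpoly F -> bpoly F -> bpoly F).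
Variable solve : bpoly F -> bpoly F -> bmat F * (bpoly F * bpoly F).

Hypothesis approx_nf : forall n, approx n nf.1 N1 /\ approx n nf.2 N2.

(* L = (L1, L2) is the differential of nf at the identity, up to an error of order m + 3. *)
Hypothesis linearization : forall m p q d e, (2 <= m)%N ->
  ordge 2 (p - pX) -> ordge 2 (q - pY) -> ordge m d -> ordge m e ->
  ordge (m + 3) (psubst N1 (p + d) (q + e) - psubst N1 p q - L1 d e) /\
  ordge (m + 3) (psubst N2 (p + d) (q + e) - psubst N2 p q - L2 d e).

Hypothesis ordge_linearization : forall k d e, ordge k d -> ordge k e ->
  ordge (k + 2) (L1 d e) /\ ordge (k + 2) (L2 d e).

(* The infinitesimal condition for 3-determinacy: m^k R^2 is contained in
   m^(k-3) <nf> + L(m^(k-2) R^2). *)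
Hypothesis solve_tangent : forall k r1 r2, (4 <= k)%N -> ordge k r1 -> ordge k r2 ->
  let: (E, (d, e)) := solve r1 r2 in
  [/\ r1 = bmat_app1 E N1 N2 + L1 d e, r2 = bmat_app2 E N1 N2 + L2 d e,
      ordge_mat (k - 3) E, ordge (k - 2) d & ordge (k - 2) e].

Variable g : ps2 F.
Hypothesis hg : jet_eq 3 g nf.

Record iterate := Iterate { it_mat : bmat F; it_p : bpoly F; it_q : bpoly F }.

Definition iter_step (n : nat) (s : iterate) : iterate :=
  let: Iterate M p q := s in
  let r1 := ps_trunc n.+4 g.1 - bmat_app1 M (psubst N1 p q) (psubst N2 p q) in
  let r2 := ps_trunc n.+4 g.2 - bmat_app2 M (psubst N1 p q) (psubst N2 p q) in
  let: (E, (d, e)) := solve r1 r2 in Iterate (bmat_add M E) (p + d) (q + e).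

Fixpoint iter_seq (n : nat) : iterate :=
  if n is n'.+1 then iter_step n' (iter_seq n') else Iterate (BMat 1 0 0 1) pX pY.

Definition iter_inv (n : nat) (s : iterate) :=
  let H1 := psubst N1 (it_p s) (it_q s) in let H2 := psubst N2 (it_p s) (it_q s) in
  [/\ near_id (it_mat s), ordge 2 (it_p s - pX), ordge 2 (it_q s - pY),
      approx n.+3 g.1 (bmat_app1 (it_mat s) H1 H2)
    & approx n.+3 g.2 (bmat_app2 (it_mat s) H1 H2)].

Lemma iter_inv0 : iter_inv 0 (iter_seq 0).
Proof.
rewrite /iter_inv /= /bmat_app1 /bmat_app2 !psubst_id mul1r mul0r addr0 mul0r add0r mul1r.
split; [by split; rewrite /= ?subrr; apply: ordge0 | exact: ordge_subrr
  | exact: ordge_subrr | |].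
- by move=> i j hij; have [-> _] := hg hij; have [+ _] := approx_nf 3; apply.
- by move=> i j hij; have [_ ->] := hg hij; have [_] := approx_nf 3; apply.
Qed.

Lemma ordge_psubst_sub_base p q : ordge 2 (p - pX) -> ordge 2 (q - pY) ->
  ordge 4 (psubst N1 p q - N1) /\ ordge 4 (psubst N2 p q - N2).
Proof.
move=> hp hq.
have [t1 t2] := linearization (leqnn 2) (ordge_subrr (k:=2) pX) (ordge_subrr (k:=2) pY) hp hq.
rewrite !(addrC (@pX F)) !(addrC (@pY F)) !subrK !psubst_id in t1 t2.
have [l1 l2] := ordge_linearization hp hq.
split.
  by rewrite -[_ - N1](subrK (L1 (p - pX) (q - pY))); apply: ordgeD => //; apply: ordgeW t1.
by rewrite -[_ - N2](subrK (L2 (p - pX) (q - pY))); apply: ordgeD => //; apply: ordgeW t2.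
Qed.

Lemma iter_step_spec n s : iter_inv n s ->
  let s' := iter_step n s in
  [/\ iter_inv n.+1 s', exists2 E, it_mat s' = bmat_add (it_mat s) E & ordge_mat n.+1 E,
      ordge n.+2 (it_p s' - it_p s) & ordge n.+2 (it_q s' - it_q s)].
Proof.
case: s => M p q [hM hp hq a1 a2] /=; have [h11 h12 h21 h22] := hM.
set H1 := psubst N1 p q; set H2 := psubst N2 p q.
set r1 := _ - bmat_app1 _ _ _; set r2 := _ - bmat_app2 _ _ _.
have or1 : ordge n.+4 r1 by apply: ordge_approx (approxW _ (approx_trunc _)) a1.
have or2 : ordge n.+4 r2 by apply: ordge_approx (approxW _ (approx_trunc _)) a2.
have := solve_tangent (isT : (3 < n.+4)%N) or1 or2.
case: (solve r1 r2) => E [d e]; rewrite !subSS !subn0 /=.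
move=> [eq1 eq2 hE hd he]; have [e11 e12 e21 e22] := hE.
have hp' : ordge 2 (p + d - pX) by rewrite addrAC; apply: ordgeD hp (ordgeW _ hd).
have hq' : ordge 2 (q + e - pY) by rewrite addrAC; apply: ordgeD hq (ordgeW _ he).
have [b1 b2] := ordge_psubst_sub_base hp' hq'.
have [t1 t2] := linearization (isT : (1 < n.+2)%N) hp hq hd he.
have [l1 l2] := ordge_linearization hd he.
rewrite !addnS !addn0 in t1 t2 l1 l2.
split; [split | by exists E | by rewrite addrC addKr | by rewrite addrC addKr].
- exact: near_id_add hM hE.
- exact: hp'.
- exact: hq'.
- apply: approx_ordge (approx_trunc _) _; rewrite -opprB; apply/ordgeN.
  apply: (@ordge_residual_row _ n.+1 (ps_trunc n.+4 g.1) (b11 M) (b12 M) 1 0 (b11 E) (b12 E)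
    N1 N2 H1 H2 _ _ (L1 d e) (L2 d e) h11 _ e11 e12 b1 b2 l1 l2 t1 t2); first by rewrite subr0.
  by rewrite mul1r mul0r addr0; exact: eq1.
- apply: approx_ordge (approx_trunc _) _; rewrite -opprB; apply/ordgeN.
  apply: (@ordge_residual_row _ n.+1 (ps_trunc n.+4 g.2) (b21 M) (b22 M) 0 1 (b21 E) (b22 E)
    N1 N2 H1 H2 _ _ (L1 d e) (L2 d e) _ h22 e21 e22 b1 b2 l1 l2 t1 t2); first by rewrite subr0.
  by rewrite mul1r mul0r add0r; exact: eq2.
Qed.

Lemma iter_seq_inv n : iter_inv n (iter_seq n).
Proof. by elim: n => [|n IH]; [exact: iter_inv0 | case: (iter_step_spec IH)]. Qed.

Lemma coherent_iter_seq :
  [/\ coherent (fun n => b11 (it_mat (iter_seq n))),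
      coherent (fun n => b12 (it_mat (iter_seq n))),
      coherent (fun n => b21 (it_mat (iter_seq n))),
      coherent (fun n => b22 (it_mat (iter_seq n))) &
      coherent (fun n => it_p (iter_seq n)) /\ coherent (fun n => it_q (iter_seq n))].
Proof.
have step n := iter_step_spec (iter_seq_inv n).
have hM n : ordge_mat n.+1 (BMat
    (b11 (it_mat (iter_seq n.+1)) - b11 (it_mat (iter_seq n)))
    (b12 (it_mat (iter_seq n.+1)) - b12 (it_mat (iter_seq n)))
    (b21 (it_mat (iter_seq n.+1)) - b21 (it_mat (iter_seq n)))
    (b22 (it_mat (iter_seq n.+1)) - b22 (it_mat (iter_seq n)))).
  have [_ [E eM hE] _ _] := step n.
  by have [] := ordge_mat_add_sub (it_mat (iter_seq n)) hE; rewrite -eM.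
split; try by apply: coherent_step => n; case: (hM n).
by split; apply: coherent_step => n; have [_ _ hp hq] := step n; apply: ordgeW (leqnSn _) _.
Qed.

Lemma contact_equiv_of_tangent_solver : contact_equiv nf g.
Proof.
have [c11 c12 c21 c22 [cp cq]] := coherent_iter_seq.
pose entry (b : bmat F -> bpoly F) := ps_lim (fun n => b (it_mat (iter_seq n))).
pose U := Mat2 (entry (@b11 F)) (entry (@b12 F)) (entry (@b21 F)) (entry (@b22 F)).
set u := ps_lim (fun n => it_p (iter_seq n)); set v := ps_lim (fun n => it_q (iter_seq n)).
have u0 : u 0%N 0%N = 0 by rewrite /u /ps_lim coef_pX.
have v0 : v 0%N 0%N = 0 by rewrite /v /ps_lim coef_pY.
have low (P Q : bpoly F) i j : ordge 2 (P - Q) -> (i + j < 2)%N -> P`_j`_i = Q`_j`_i.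
  by move=> h hij; move/eqP: (h i j hij); rewrite !coefB subr_eq0 => /eqP.
exists U, u, v; split.
  by apply: GL2_det; rewrite /U /entry /ps_lim /= !coef1 !coef0 /= mulr1 mulr0 subr0 oner_neq0.
split.
  split; [exact: u0 | split; first exact: v0].
  have [_ hp1 hq1 _ _] := iter_seq_inv 1.
  rewrite /u /v /ps_lim (low _ _ 1 0 hp1) // (low _ _ 0 1 hp1) // (low _ _ 1 0 hq1) //.
  by rewrite (low _ _ 0 1 hq1) // !coef_pX !coef_pY /= mulr1 mulr0 subr0 oner_neq0.
have hu n := approx_lim (n := n) cp; have hv n := approx_lim (n := n) cq.
have hsub n := approx_subst (approx_nf n).1 (hu n) (hv n) u0 v0.
have hsub' n := approx_subst (approx_nf n).2 (hu n) (hv n) u0 v0.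
have hn n : (n <= n.+3)%N := leqW (leqW (leqnSn n)).
have e1 : g.1 = (matapp U (subst2 nf u v)).1.
  apply: ps_ext => n; have [_ _ _ a1 _] := iter_seq_inv n.
  eexists; split; first exact: approxW (hn n) a1.
  exact: approx_add (approx_mul (approx_lim c11) (hsub n))
    (approx_mul (approx_lim c12) (hsub' n)).
have e2 : g.2 = (matapp U (subst2 nf u v)).2.
  apply: ps_ext => n; have [_ _ _ _ a2] := iter_seq_inv n.
  eexists; split; first exact: approxW (hn n) a2.
  exact: approx_add (approx_mul (approx_lim c21) (hsub n))
    (approx_mul (approx_lim c22) (hsub' n)).
by move: e1 e2; case: (matapp _ _) => m1 m2 /= <- <-; case: (g).
Qed.

End DeterminacyCriterion.

Section QuarticDecomposition.
Context {F : fieldType}.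
Implicit Types P Q : bpoly F.

(* For P in m^4: P = \sum_(c <= 4) x^c y^(4-c) (m4_coef c P); the x^4 part takes
   all monomials x^i y^j with i >= 4, the x^c y^(4-c) part (c < 4) those with i = c. *)
Definition m4_coef (c : nat) P : bpoly F :=
  \poly_(j < deg_bound P) \poly_(i < deg_bound P)
    (if c == 4%N then P`_j`_(i + 4) else if i == 0%N then P`_(j + (4 - c))`_c else 0).

Lemma coef_deg_bound P i j : (deg_bound P <= j)%N || (deg_bound P <= i)%N -> P`_j`_i = 0.
Proof.
case/orP => h.
  by rewrite [P`_j]nth_default ?coef0 //; apply: leq_trans (size_le_deg_bound P) h.
by rewrite nth_default //; apply: leq_trans (size_coef_le_deg_bound P j) h.
Qed.

Lemma coef_m4_coef c P i j : (m4_coef c P)`_j`_i =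
  if c == 4%N then P`_j`_(i + 4) else if i == 0%N then P`_(j + (4 - c))`_c else 0.
Proof.
rewrite /m4_coef coef_poly; case: ltnP => hj; last first.
  rewrite coef0; case: ifP => _; first by rewrite coef_deg_bound ?hj.
  by case: ifP => _ //; rewrite coef_deg_bound //; apply/orP; left; lia.
rewrite coef_poly; case: ltnP => hi //.
case: ifP => _; first by rewrite coef_deg_bound //; apply/orP; right; lia.
by case: ifP => // /eqP hi0; subst i; rewrite coef_deg_bound //; apply/orP; left; lia.
Qed.

Lemma coef_monomialM a b Q i j : (pX ^+ a * pY ^+ b * Q)`_j`_i =
  if (a <= i)%N && (b <= j)%N then Q`_(j - b)`_(i - a) else 0.
Proof.
rewrite -mulrA /pX -rmorphXn /= coefCM /pY !coefXnM.
by case: (ltnP j b) => hj; case: (ltnP i a) => hi //=; rewrite ?coef0 ?mulr0 ?andbF.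
Qed.

Lemma m4_decomp P : ordge 4 P ->
  P = pX ^+ 4 * pY ^+ 0 * m4_coef 4 P + pX ^+ 3 * pY ^+ 1 * m4_coef 3 P
      + pX ^+ 2 * pY ^+ 2 * m4_coef 2 P + pX ^+ 1 * pY ^+ 3 * m4_coef 1 P
      + pX ^+ 0 * pY ^+ 4 * m4_coef 0 P.
Proof.
move=> hP; apply/polyP => j; apply/polyP => i.
rewrite !coefD !coef_monomialM !coef_m4_coef /=.
case: i => [|[|[|[|i]]]] /=; rewrite ?if_same ?add0r ?addr0.
1-4: by case: ltnP => hj; [rewrite (_ : (j - _ + _)%N = j) //; lia | rewrite hP //; lia].
by rewrite subn0 (_ : (i.+4 - 4 + 4 = i.+4)%N) //; lia.
Qed.

Lemma ordge_m4_coef k c P : (c <= 4)%N -> ordge k P -> ordge (k - 4) (m4_coef c P).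
Proof.
move=> hc hP i j hij; rewrite coef_m4_coef.
case: eqP => [hc4|_]; first by rewrite hP //; lia.
by case: eqP => // hi; subst i; rewrite hP //; lia.
Qed.

Lemma ordge_m4_coefM1 k c P Q : (c <= 4)%N -> (4 <= k)%N -> ordge k P -> ordge 1 Q ->
  ordge (k - 3) (m4_coef c P * Q).
Proof. by move=> hc hk hP hQ; apply: ordgeW (ordgeM (ordge_m4_coef hc hP) hQ); lia. Qed.

Lemma ordge_m4_coefM2 k c P Q : (c <= 4)%N -> (4 <= k)%N -> ordge k P -> ordge 2 Q ->
  ordge (k - 2) (m4_coef c P * Q).
Proof. by move=> hc hk hP hQ; apply: ordgeW (ordgeM (ordge_m4_coef hc hP) hQ); lia. Qed.

Lemma ordge_pX2 : ordge 2 (pX ^+ 2 : bpoly F). Proof. exact: (ordgeX (n := 2) ordge_pX). Qed.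
Lemma ordge_pY2 : ordge 2 (pY ^+ 2 : bpoly F). Proof. exact: (ordgeX (n := 2) ordge_pY). Qed.
Lemma ordge_pXY : ordge 2 (pX * pY : bpoly F). Proof. exact: (ordgeM ordge_pX ordge_pY). Qed.

End QuarticDecomposition.

Section CharTwo.
Context {F : fieldType}.
Hypothesis char2 : (2%:R : F) = 0.
Implicit Types p q z d e : bpoly F.

Lemma char2_bpoly : (2 : bpoly F) = 0.
Proof. by have := @pC0 F; rewrite -char2 /pC !polyC_natr. Qed.

(* In characteristic 2 the linear term 3 z^2 d of (z + d)^3 is z^2 d. *)
Lemma ordge_cube_linearization m p z d : (2 <= m)%N -> ordge 1 z -> ordge 2 (p - z) -> ordge m d ->
  ordge (m + 3) ((p + d) ^+ 3 - p ^+ 3 - z ^+ 2 * d).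
Proof.
move=> hm hz hpz hd; have hp : ordge 1 p := ordge1_shift hz hpz.
rewrite (_ : _ - _ - _ = (p - z) * (p + z) * d + p * d ^+ 2 + d ^+ 3
    + 2 * (p ^+ 2 * d + p * d ^+ 2)); last by ring.
rewrite char2_bpoly mul0r addr0; apply: ordgeD; first apply: ordgeD.
- by apply: ordgeW (ordgeM (ordgeM hpz (ordgeD hp hz)) hd); lia.
- by apply: ordgeW (ordgeM hp (ordgeX (n := 2) hd)); lia.
- by apply: ordgeW (ordgeX (n := 3) hd); lia.
Qed.

Lemma ordge_sqmul_linearization m p q z d e : (2 <= m)%N -> ordge 1 z -> ordge 2 (p - z) ->
  ordge 1 q -> ordge m d -> ordge m e ->
  ordge (m + 3) ((p + d) ^+ 2 * (q + e) - p ^+ 2 * q - z ^+ 2 * e).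
Proof.
move=> hm hz hpz hq hd he; have hp : ordge 1 p := ordge1_shift hz hpz.
rewrite (_ : _ - _ - _ = (p - z) * (p + z) * e + d ^+ 2 * q + d ^+ 2 * e
    + 2 * (p * d * (q + e))); last by ring.
rewrite char2_bpoly mul0r addr0; apply: ordgeD; first apply: ordgeD.
- by apply: ordgeW (ordgeM (ordgeM hpz (ordgeD hp hz)) he); lia.
- by apply: ordgeW (ordgeM (ordgeX (n := 2) hd) hq); lia.
- by apply: ordgeW (ordgeM (ordgeX (n := 2) hd) he); lia.
Qed.

End CharTwo.

Ltac ordge_form := repeat first [ exact: ordge_pX | exact: ordge_pY | exact: ordge_pX2
  | exact: ordge_pY2 | exact: ordge_pXY | apply: ordgeD | apply: ordgeN | apply: ordgeMl ].

Ltac ordge_solution := repeat first [ apply: ordgeD | apply: ordgeN ]; try exact: ordge0;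
  first [ apply: ordge_m4_coefM1 => //; ordge_form | apply: ordge_m4_coefM2 => //; ordge_form ].

Section NormalForms.
Context {F : fieldType}.
Hypothesis char2 : (2%:R : F) = 0.
Local Notation m4 := m4_coef.

Definition nf2_L1 (d e : bpoly F) : bpoly F := pX ^+ 2 * d.
Definition nf2_L2 (d e : bpoly F) : bpoly F := pY ^+ 2 * e.

(* Writing r in m^4 as in [m4_decomp], each quartic monomial is either a multiple of
   x^3 or y^3 (absorbed in E) or of the form x^2 (y^2 a) or y^2 (x^2 b) (absorbed by L). *)
Definition nf2_solve (r1 r2 : bpoly F) : bmat F * (bpoly F * bpoly F) :=
  (BMat (m4 4 r1 * pX + m4 3 r1 * pY) (m4 1 r1 * pX + m4 0 r1 * pY)
        (m4 4 r2 * pX + m4 3 r2 * pY) (m4 1 r2 * pX + m4 0 r2 * pY),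
   (m4 2 r1 * pY ^+ 2, m4 2 r2 * pX ^+ 2)).

Lemma NF2_determined : determined 3 (NF2 F).
Proof.
move=> g; apply: (@contact_equiv_of_tangent_solver _ _ (pX ^+ 3) (pY ^+ 3)
  nf2_L1 nf2_L2 nf2_solve).
- by move=> n; split; [have := @approx_mono F n 3 0 | have := @approx_mono F n 0 3];
    rewrite ?expr0 ?mulr1 ?mul1r.
- move=> m p q d e hm hp hq hd he; rewrite /nf2_L1 /nf2_L2; psubst_simpl; split.
  + exact: (ordge_cube_linearization char2 hm ordge_pX hp hd).
  + exact: (ordge_cube_linearization char2 hm ordge_pY hq he).
- move=> k d e hd he; rewrite addnC.
  by split; [exact: ordgeM ordge_pX2 hd | exact: ordgeM ordge_pY2 he].
- move=> k r1 r2 hk o1 o2 /=.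
  have e1 := m4_decomp (ordgeW hk o1); have e2 := m4_decomp (ordgeW hk o2).
  split; rewrite /bmat_app1 /bmat_app2 /nf2_L1 /nf2_L2 /=.
  + by rewrite {1}e1; ring.
  + by rewrite {1}e2; ring.
  + by split; ordge_solution.
  + by ordge_solution.
  + by ordge_solution.
Qed.

Definition nf1_L1 (d e : bpoly F) : bpoly F := pX ^+ 2 * d.
Definition nf1_L2 (d e : bpoly F) : bpoly F := pY ^+ 2 * e + pX ^+ 2 * e.
Definition nf1_solve (r1 r2 : bpoly F) : bmat F * (bpoly F * bpoly F) :=
  (BMat (m4 4 r1 * pX + m4 3 r1 * pY - m4 1 r1 * pY) (m4 1 r1 * pX + m4 0 r1 * pY)
        (m4 4 r2 * pX + m4 3 r2 * pY - m4 2 r2 * pX - m4 1 r2 * pY + m4 0 r2 * pX) 0,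
   (m4 2 r1 * pY ^+ 2 - m4 0 r1 * pY ^+ 2,
    m4 2 r2 * pX ^+ 2 + m4 1 r2 * (pX * pY) + m4 0 r2 * (pY ^+ 2 - pX ^+ 2))).

Lemma NF1_determined : determined 3 (NF1 F).
Proof.
move=> g; apply: (@contact_equiv_of_tangent_solver _ _ (pX ^+ 3) (pY ^+ 3 + pX ^+ 2 * pY)
  nf1_L1 nf1_L2 nf1_solve).
- by move=> n; split; [have := @approx_mono F n 3 0 | have := approx_add
    (@approx_mono F n 0 3) (@approx_mono F n 2 1)]; rewrite ?expr0 ?mulr1 ?mul1r ?expr1.
- move=> m p q d e hm hp hq hd he; rewrite /nf1_L1 /nf1_L2; psubst_simpl; split.
  + exact: (ordge_cube_linearization char2 hm ordge_pX hp hd).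
  + rewrite (_ : _ - _ - _ = ((q + e) ^+ 3 - q ^+ 3 - pY ^+ 2 * e)
      + ((p + d) ^+ 2 * (q + e) - p ^+ 2 * q - pX ^+ 2 * e)); last by ring.
    apply: ordgeD; first exact: (ordge_cube_linearization char2 hm ordge_pY hq he).
    exact: (ordge_sqmul_linearization char2 hm ordge_pX hp (ordge1_shift ordge_pY hq) hd he).
- move=> k d e hd he; rewrite addnC; split; first exact: ordgeM ordge_pX2 hd.
  by apply: ordgeD; [exact: ordgeM ordge_pY2 he | exact: ordgeM ordge_pX2 he].
- move=> k r1 r2 hk o1 o2 /=.
  have e1 := m4_decomp (ordgeW hk o1); have e2 := m4_decomp (ordgeW hk o2).
  split; rewrite /bmat_app1 /bmat_app2 /nf1_L1 /nf1_L2 /=.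
  + by rewrite {1}e1; ring.
  + by rewrite {1}e2; ring.
  + by split; ordge_solution.
  + by ordge_solution.
  + by ordge_solution.
Qed.

Definition nf4_L1 (d e : bpoly F) : bpoly F := pX ^+ 2 * e.
Definition nf4_L2 (d e : bpoly F) : bpoly F := pX ^+ 2 * d + pY ^+ 2 * e.
Definition nf4_solve (r1 r2 : bpoly F) : bmat F * (bpoly F * bpoly F) :=
  (BMat (m4 3 r1 * pX + m4 2 r1 * pY - m4 0 r1 * pX) (m4 1 r1 * pX + m4 0 r1 * pY)
        0 (m4 1 r2 * pX + m4 0 r2 * pY),
   (m4 4 r2 * pX ^+ 2 + m4 3 r2 * (pX * pY) + m4 2 r2 * pY ^+ 2 - m4 1 r2 * pX ^+ 2
      - m4 0 r2 * (pX * pY) + m4 1 r1 * pY ^+ 2 - m4 4 r1 * pY ^+ 2,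
    m4 4 r1 * pX ^+ 2 - m4 1 r1 * pX ^+ 2)).

Lemma NF4_determined : determined 3 (NF4 F).
Proof.
move=> g; apply: (@contact_equiv_of_tangent_solver _ _ (pX ^+ 2 * pY) (pX ^+ 3 + pY ^+ 3)
  nf4_L1 nf4_L2 nf4_solve).
- by move=> n; split; [have := @approx_mono F n 2 1 | have := approx_add
    (@approx_mono F n 3 0) (@approx_mono F n 0 3)]; rewrite ?expr0 ?mulr1 ?mul1r ?expr1.
- move=> m p q d e hm hp hq hd he; rewrite /nf4_L1 /nf4_L2; psubst_simpl; split.
  + exact: (ordge_sqmul_linearization char2 hm ordge_pX hp (ordge1_shift ordge_pY hq) hd he).
  + rewrite (_ : _ - _ - _ = ((p + d) ^+ 3 - p ^+ 3 - pX ^+ 2 * d)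
      + ((q + e) ^+ 3 - q ^+ 3 - pY ^+ 2 * e)); last by ring.
    apply: ordgeD; first exact: (ordge_cube_linearization char2 hm ordge_pX hp hd).
    exact: (ordge_cube_linearization char2 hm ordge_pY hq he).
- move=> k d e hd he; rewrite addnC; split; first exact: ordgeM ordge_pX2 he.
  by apply: ordgeD; [exact: ordgeM ordge_pX2 hd | exact: ordgeM ordge_pY2 he].
- move=> k r1 r2 hk o1 o2 /=.
  have e1 := m4_decomp (ordgeW hk o1); have e2 := m4_decomp (ordgeW hk o2).
  split; rewrite /bmat_app1 /bmat_app2 /nf4_L1 /nf4_L2 /=.
  + by rewrite {1}e1; ring.
  + by rewrite {1}e2; ring.
  + by split; ordge_solution.
  + by ordge_solution.
  + by ordge_solution.
Qed.

Variable lam : F.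
Hypothesis lam_neq1 : lam != 1.

(* In characteristic 2, lam != 1 means 1 + lam != 0. *)
Definition mu : F := (1 + lam)^-1.

Lemma pC_lam_mu : pC lam * pC mu = 1 - pC mu.
Proof.
have lam1 : 1 + lam != 0.
  apply: contra lam_neq1; rewrite addr_eq0 => /eqP h.
  have : (1 : F) + 1 == 0 by rewrite -mulr2n char2.
  by rewrite addr_eq0 => /eqP h11; rewrite -[lam]opprK -h -h11.
rewrite -pCM -pC1 -pCB; congr pC.
by rewrite -[1 in RHS](mulfV lam1) mulrDl mul1r addrAC subrr add0r.
Qed.

Definition nf3_L1 (d e : bpoly F) : bpoly F := pX ^+ 2 * d + pX ^+ 2 * e.
Definition nf3_L2 (d e : bpoly F) : bpoly F := pY ^+ 2 * e + pC lam * (pX ^+ 2 * e).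
Definition nf3_e (r2 : bpoly F) : bpoly F :=
  m4 4 r2 * (pC mu * pX ^+ 2) - m4 3 r2 * (pC mu * pX ^+ 2) + m4 2 r2 * (pC mu * pX ^+ 2)
  + m4 1 r2 * (pC lam * pC mu * pX ^+ 2) - m4 0 r2 * (pC lam * pC mu * pX ^+ 2).
Definition nf3_solve (r1 r2 : bpoly F) : bmat F * (bpoly F * bpoly F) :=
  (BMat 0 (m4 1 r1 * pX + m4 0 r1 * pY)
      (m4 4 r2 * (pC mu * pX) + m4 3 r2 * (pC lam * pC mu * pX) - m4 2 r2 * (pC lam * pC mu * pX)
       - m4 1 r2 * (pC lam * pC lam * pC mu * pX) + m4 0 r2 * (pC lam * pC lam * pC mu * pX)
       - m4 4 r2 * (pC mu * pY) + m4 3 r2 * (pC mu * pY) + m4 2 r2 * (pC lam * pC mu * pY)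
       - m4 1 r2 * (pC lam * pC mu * pY) - m4 0 r2 * (pC lam * pC lam * pC mu * pY))
      (m4 1 r2 * pX + m4 0 r2 * pY),
   (m4 4 r1 * pX ^+ 2 + m4 3 r1 * (pX * pY) + m4 2 r1 * pY ^+ 2
      - m4 1 r1 * (pC lam * (pX * pY)) - m4 0 r1 * (pC lam * pY ^+ 2) - nf3_e r2,
    nf3_e r2)).

Lemma NF3_determined : determined 3 (NF3 lam).
Proof.
move=> g; apply: (@contact_equiv_of_tangent_solver _ _ (pX ^+ 3 + pX ^+ 2 * pY)
  (pY ^+ 3 + pC lam * (pX ^+ 2 * pY)) nf3_L1 nf3_L2 nf3_solve).
- by move=> n; split; [have := approx_add (@approx_mono F n 3 0) (@approx_mono F n 2 1)
    | have := approx_add (@approx_mono F n 0 3) (approx_scale lam (@approx_mono F n 2 1))];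
    rewrite ?expr0 ?mulr1 ?mul1r ?expr1.
- move=> m p q d e hm hp hq hd he; rewrite /nf3_L1 /nf3_L2; psubst_simpl.
  have hsq := ordge_sqmul_linearization char2 hm ordge_pX hp (ordge1_shift ordge_pY hq) hd he.
  split.
  + rewrite (_ : _ - _ - _ = ((p + d) ^+ 3 - p ^+ 3 - pX ^+ 2 * d)
      + ((p + d) ^+ 2 * (q + e) - p ^+ 2 * q - pX ^+ 2 * e)); last by ring.
    exact: ordgeD (ordge_cube_linearization char2 hm ordge_pX hp hd) hsq.
  + rewrite (_ : _ - _ - _ = ((q + e) ^+ 3 - q ^+ 3 - pY ^+ 2 * e)
      + pC lam * ((p + d) ^+ 2 * (q + e) - p ^+ 2 * q - pX ^+ 2 * e)); last by ring.
    exact: ordgeD (ordge_cube_linearization char2 hm ordge_pY hq he) (ordgeMl _ hsq).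
- move=> k d e hd he; rewrite addnC; split.
    by apply: ordgeD; [exact: ordgeM ordge_pX2 hd | exact: ordgeM ordge_pX2 he].
  by apply: ordgeD; [exact: ordgeM ordge_pY2 he | exact: ordgeMl (ordgeM ordge_pX2 he)].
- move=> k r1 r2 hk o1 o2 /=.
  have e1 := m4_decomp (ordgeW hk o1); have e2 := m4_decomp (ordgeW hk o2).
  have hlm := pC_lam_mu.
  split; rewrite /bmat_app1 /bmat_app2 /nf3_L1 /nf3_L2 /nf3_e /=.
  + by rewrite {1}e1; move: hlm; generalize (pC lam) (pC mu) => l u hlm; ring: hlm.
  + by rewrite {1}e2; move: hlm; generalize (pC lam) (pC mu) => l u hlm; ring: hlm.
  + by split; ordge_solution.
  + by rewrite /nf3_e; ordge_solution.
  + by rewrite /nf3_e; ordge_solution.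
Qed.

End NormalForms.

Section JetTransfer.
Context {F : fieldType}.

Lemma approx_jet k (h c : ps2 F) : jet_eq k h c ->
  approx k h.1 (ps_trunc k c.1) /\ approx k h.2 (ps_trunc k c.2).
Proof.
by move=> hh; split=> i j hij; have [e1 e2] := hh i j hij; [rewrite e1 | rewrite e2];
  apply: approx_trunc.
Qed.

Lemma jet_eq_contact k (g c : ps2 F) (U : mat2 F) (u v : ps F) :
  u 0%N 0%N = 0 -> v 0%N 0%N = 0 -> jet_eq k g c ->
  jet_eq k (matapp U (subst2 g u v)) (matapp U (subst2 c u v)).
Proof.
move=> u0 v0 hg.
have key (h : ps2 F) : jet_eq k h c ->
  approx k (matapp U (subst2 h u v)).1
    (ps_trunc k (m11 U) * psubst (ps_trunc k c.1) (ps_trunc k u) (ps_trunc k v)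
     + ps_trunc k (m12 U) * psubst (ps_trunc k c.2) (ps_trunc k u) (ps_trunc k v)) /\
  approx k (matapp U (subst2 h u v)).2
    (ps_trunc k (m21 U) * psubst (ps_trunc k c.1) (ps_trunc k u) (ps_trunc k v)
     + ps_trunc k (m22 U) * psubst (ps_trunc k c.2) (ps_trunc k u) (ps_trunc k v)).
  move=> /approx_jet [a1 a2]; split; apply: approx_add; apply: approx_mul;
    by [apply: approx_trunc | apply: approx_subst => //; apply: approx_trunc].
have [k1 k2] := key g hg; have [k3 k4] := key c (fun i j _ => conj erefl erefl).
by move=> i j hij; rewrite (k1 i j hij) (k2 i j hij) (k3 i j hij) (k4 i j hij).
Qed.

Lemma determined_contact_equiv (c nf : ps2 F) :
  contact_equiv c nf -> determined 3 nf -> determined 3 c.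
Proof.
move=> hcn hnf g hg; have [U [u [v [hU [huv hnfE]]]]] := hcn; have [u0 [v0 _]] := huv.
have hgU : contact_equiv g (matapp U (subst2 g u v)) by exists U, u, v.
have hj : jet_eq 3 (matapp U (subst2 g u v)) nf by rewrite hnfE; apply: jet_eq_contact.
exact: contact_equiv_trans hcn (contact_equiv_trans (hnf _ hj) (contact_equiv_sym hgU)).
Qed.

Lemma jet_eq_jet k (f : ps2 F) : jet_eq k f (jet k f).
Proof. by move=> i j hij; rewrite /jet /= hij. Qed.

End JetTransfer.

Unset Implicit Arguments.

Theorem proposition6p3 (F : closedFieldType) (char2 : (2 \in [pchar F])%N)
  (f : ps2 F) :
  (contact_equiv (jet 3 f) (NF1 F) \/ contact_equiv (jet 3 f) (NF2 F) \/
   (exists lam : F, lam != 1 /\ contact_equiv (jet 3 f) (NF3 lam)) \/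
   contact_equiv (jet 3 f) (NF4 F)) ->
  determined 3 (jet 3 f) /\
  (contact_equiv (jet 3 f) (NF1 F) -> contact_equiv f (NF1 F)) /\
  (contact_equiv (jet 3 f) (NF2 F) -> contact_equiv f (NF2 F)) /\
  (forall lam : F, lam != 1 -> contact_equiv (jet 3 f) (NF3 lam) ->
     contact_equiv f (NF3 lam)) /\
  (contact_equiv (jet 3 f) (NF4 F) -> contact_equiv f (NF4 F)).
Proof.
move=> hf; have two0 : (2%:R : F) = 0 := pcharf0 char2.
have det : determined 3 (jet 3 f).
  case: hf => [|[|[[lam [hlam]]|]]] /determined_contact_equiv; apply.
  - exact: (NF1_determined two0).
  - exact: (NF2_determined two0).
  - exact: (NF3_determined two0 hlam).
  - exact: (NF4_determined two0).
have hfj : contact_equiv f (jet 3 f) := contact_equiv_sym (det f (@jet_eq_jet _ 3 f)).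
split; first exact: det.
by do !split=> *; apply: contact_equiv_trans hfj _.
Qed.
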